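(* There exists a unique $\mathbb{Q}(q)$-algebra anti-isomorphism $\sigma\colon \mathrm{El}^\vee_\epsilon\to \mathrm{El}_\epsilon$ with $\sigma(\mathcal{E}_i)=q^{-\epsilon}\mathcal{E}_{i+1}$ for all $i\in\mathbb{Z}$ (anti-isomorphism: $\mathbb{Q}(q)$-linear bijection with $\sigma(uv)=\sigma(v)\sigma(u)$ and $\sigma(1)=1$).
   Context: $\mathbb{Q}(q)$ is the field of rational functions in $q$ over $\mathbb{Q}$; $[2]=q+q^{-1}$. Fix $\epsilon\in\{1,-1\}$. For $i,j\in\mathbb{Z}$ put $b_{ij}=-2$ if $j\in\{i,i+1\}$ and $b_{ij}=4\,\mathrm{sgn}(j-i)(-1)^{j-i}$ otherwise. The $q$-electrical algebra $\mathrm{El}_\epsilon$ is the $\mathbb{Q}(q)$-algebra generated by $\mathcal{E}_i$, $i\in\mathbb{Z}$, subject to: (1) $\mathcal{E}_i\mathcal{E}_j=q^{b_{ij}}\mathcal{E}_j\mathcal{E}_i$ if $|i-j|>1$; (2) $q^3\mathcal{E}_i^2\mathcal{E}_{i+1}-[2]\mathcal{E}_i\mathcal{E}_{i+1}\mathcal{E}_i+q^{-3}\mathcal{E}_{i+1}\mathcal{E}_i^2=-q^{\epsilon}[2]\mathcal{E}_i$; (3) $q^{-3}\mathcal{E}_i^2\mathcal{E}_{i-1}-[2]\mathcal{E}_i\mathcal{E}_{i-1}\mathcal{E}_i+q^{3}\mathcal{E}_{i-1}\mathcal{E}_i^2=-q^{\epsilon}[2]\mathcal{E}_i$, for all $i,j\in\mathbb{Z}$.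 The algebra $\mathrm{El}^\vee_\epsilon$ is the $\mathbb{Q}(q)$-algebra generated by $\mathcal{E}_i$, $i\in\mathbb{Z}$, subject to: (1') $\mathcal{E}_i\mathcal{E}_j=q^{-b_{ij}}\mathcal{E}_j\mathcal{E}_i$ if $|i-j|>1$; (2') $q^{-3}\mathcal{E}_i^2\mathcal{E}_{i+1}-[2]\mathcal{E}_i\mathcal{E}_{i+1}\mathcal{E}_i+q^{3}\mathcal{E}_{i+1}\mathcal{E}_i^2=-q^{-\epsilon}[2]\mathcal{E}_i$; (3') $q^{3}\mathcal{E}_i^2\mathcal{E}_{i-1}-[2]\mathcal{E}_i\mathcal{E}_{i-1}\mathcal{E}_i+q^{-3}\mathcal{E}_{i-1}\mathcal{E}_i^2=-q^{-\epsilon}[2]\mathcal{E}_i$. *)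

From HB Require Import structures.
From mathcomp Require Import all_boot all_order all_algebra fraction.
Set Implicit Arguments. Unset Strict Implicit. Unset Printing Implicit Defensive.
Import Order.TTheory GRing.Theory Num.Theory.
Local Open Scope ring_scope.

Definition Kq : fieldType := {fraction {poly rat}}.
Definition q : Kq := @FracField.tofrac {poly rat} 'X.
Definition q2 : Kq := q + q^-1.

Definition bq (i j : int) : int :=
  if (j == i) || (j == i + 1) then -2
  else 4 * sgz (j - i) * (-1) ^ (j - i).

Definition El_rels (eps : int) (A : algType Kq) (E : int -> A) : Prop :=
  (forall i j : int, 1 < `|i - j| -> E i * E j = q ^ (bq i j) *: (E j * E i)) /\
  (forall i : int,
     q ^ 3 *: (E i ^+ 2 * E (i + 1)) - q2 *: (E i * E (i + 1) * E i)
       + q ^ (-3) *: (E (i + 1) * E i ^+ 2) = - (q ^ eps * q2) *: E i) /\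
  (forall i : int,
     q ^ (-3) *: (E i ^+ 2 * E (i - 1)) - q2 *: (E i * E (i - 1) * E i)
       + q ^ 3 *: (E (i - 1) * E i ^+ 2) = - (q ^ eps * q2) *: E i).

Definition Elv_rels (eps : int) (A : algType Kq) (E : int -> A) : Prop :=
  (forall i j : int, 1 < `|i - j| -> E i * E j = q ^ (- bq i j) *: (E j * E i)) /\
  (forall i : int,
     q ^ (-3) *: (E i ^+ 2 * E (i + 1)) - q2 *: (E i * E (i + 1) * E i)
       + q ^ 3 *: (E (i + 1) * E i ^+ 2) = - (q ^ (- eps) * q2) *: E i) /\
  (forall i : int,
     q ^ 3 *: (E i ^+ 2 * E (i - 1)) - q2 *: (E i * E (i - 1) * E i)
       + q ^ (-3) *: (E (i - 1) * E i ^+ 2) = - (q ^ (- eps) * q2) *: E i).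

Definition is_alg_hom (A B : algType Kq) (f : A -> B) : Prop :=
  (forall (a : Kq) (x y : A), f (a *: x + y) = a *: f x + f y) /\
  (forall x y : A, f (x * y) = f x * f y) /\ f 1 = 1.

Definition is_alg_antiiso (A B : algType Kq) (f : A -> B) : Prop :=
  (forall (a : Kq) (x y : A), f (a *: x + y) = a *: f x + f y) /\
  bijective f /\
  (forall x y : A, f (x * y) = f y * f x) /\ f 1 = 1.

(* (A, E) is the Kq-algebra presented by generators E_i (i in Z) and the
   relations rels: E satisfies rels, and for every Kq-algebra B with a family
   F satisfying rels there is a unique algebra homomorphism A -> B sending
   E i to F i. *)
Definition presents (rels : forall B : algType Kq, (int -> B) -> Prop)
    (A : algType Kq) (E : int -> A) : Prop :=
  rels A E /\
  forall (B : algType Kq) (F : int -> B), rels B F ->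
    exists f : A -> B, is_alg_hom f /\ (forall i, f (E i) = F i) /\
      forall g : A -> B, is_alg_hom g -> (forall i, g (E i) = F i) ->
        forall x, g x = f x.

From HB Require Import structures.
From mathcomp Require Import all_boot all_order all_algebra ring zify.
Set Implicit Arguments.
Unset Strict Implicit.
Unset Printing Implicit Defensive.
Import GRing.Theory.
Local Open Scope ring_scope.

(** An anti-homomorphism El^vee -> El is a homomorphism El^vee -> El^c into the
    converse algebra, and a short computation shows that the family
    q^-eps E_(i+1) satisfies the El^vee relations in El^c (the shift i -> i+1
    preserves b_ij, the converse product swaps b_ij with b_ji = -b_ij for far
    pairs and exchanges the outer coefficients q^3, q^-3 of the Serre-type
    relations, and the rescaling by q^-eps turns q^eps [2] into q^-eps [2]).
    Symmetrically q^eps E^vee_(i-1) satisfies the El relations in (El^vee)^c.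
    The universal properties give the two maps; their composites are
    homomorphisms fixing the generators, hence identities, and uniqueness is
    again the universal property of El^vee. *)

Section ConverseAlgebra.
Variables (R : comNzRingType) (A : algType R).

HB.instance Definition _ := GRing.Lmodule.copy A^c A.

Lemma conv_scalerAl (a : R) (u v : A^c) : a *: (u * v) = (a *: u : A^c) * v.
Proof. exact: (scalerAr a (v : A) u). Qed.

HB.instance Definition _ := GRing.Lmodule_isLalgebra.Build R A^c conv_scalerAl.

Lemma conv_scalerAr (a : R) (u v : A^c) : a *: (u * v) = u * (a *: v : A^c).
Proof. exact: (scalerAl a (v : A) u). Qed.

HB.instance Definition _ := GRing.Lalgebra_isAlgebra.Build R A^c conv_scalerAr.

Lemma conv_qcommute (c s : R) (x y : A) :
  x * y = s *: (y * x) ->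
  (c *: y : A^c) * (c *: x : A^c) = s *: ((c *: x : A^c) * (c *: y : A^c)).
Proof.
move=> xy; change ((c *: x) * (c *: y) = s *: ((c *: y) * (c *: x)) :> A).
rewrite -!scalerAl -!scalerAr xy !scalerA; congr (_ *: _); ring.
Qed.

Lemma conv_serre (a b t r c : R) (x y : A) :
  a *: (x ^+ 2 * y) - t *: (x * y * x) + b *: (y * x ^+ 2) = r *: x ->
  b *: ((c *: x : A^c) ^+ 2 * (c *: y : A^c))
   - t *: ((c *: x : A^c) * (c *: y : A^c) * (c *: x : A^c))
   + a *: ((c *: y : A^c) * (c *: x : A^c) ^+ 2) = (r * c ^+ 2) *: (c *: x : A^c).
Proof.
move=> serre.
change (b *: ((c *: y) * ((c *: x) * (c *: x))) - t *: ((c *: x) * ((c *: y) * (c *: x)))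
   + a *: (((c *: x) * (c *: x)) * (c *: y)) = (r * c ^+ 2) *: (c *: x) :> A).
transitivity (c ^+ 3 *: (a *: (x ^+ 2 * y) - t *: (x * y * x) + b *: (y * x ^+ 2)));
  last by rewrite serre !scalerA; congr (_ *: _); ring.
rewrite scalerDr scalerBr [RHS]addrC (addrC (_ *: (_ *: (_ ^+ 2 * _)))) addrA.
rewrite -!scalerAl -!scalerAr !scalerA !expr2 !mulrA -!scalerAl !scalerA.
congr (_ *: _ - _ *: _ + _ *: _); ring.
Qed.

End ConverseAlgebra.

Section AlgebraMaps.
Variables A B C : algType Kq.

Lemma linear_scale (f : A -> B) :
  (forall a x y, f (a *: x + y) = a *: f x + f y) -> forall a x, f (a *: x) = a *: f x.
Proof.
move=> lin_f a x; have f0 : f 0 = 0.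
  by apply: (@addrI _ (f 0)); rewrite addr0 -{1}(scale1r (f 0)) -lin_f scale1r addr0.
by rewrite -[a *: x]addr0 lin_f f0 addr0.
Qed.

Lemma is_alg_hom_conv_comp (f : A -> B^c) (g : B -> C^c) :
  is_alg_hom f -> is_alg_hom g -> is_alg_hom (fun x => g (f x) : C).
Proof.
move=> [lin_f [mul_f one_f]] [lin_g [mul_g one_g]]; split; [|split].
- by move=> a x y; rewrite lin_f; apply: lin_g.
- by move=> x y; rewrite mul_f; apply: mul_g.
- by rewrite one_f; apply: one_g.
Qed.

Lemma alg_antiiso_conv (f : A -> B) :
  is_alg_antiiso f -> is_alg_hom (f : A -> B^c).
Proof. by move=> [lin_f [_ [mul_f one_f]]]. Qed.

Lemma conv_alg_antiiso (f : A -> B^c) :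
  is_alg_hom f -> bijective f -> is_alg_antiiso (f : A -> B).
Proof. by move=> [lin_f [mul_f one_f]] bij_f. Qed.

End AlgebraMaps.

Lemma presents_hom_id (rels : forall B : algType Kq, (int -> B) -> Prop)
    (A : algType Kq) (E : int -> A) (g : A -> A) :
  presents rels E -> is_alg_hom g -> (forall i, g (E i) = E i) -> g =1 id.
Proof.
move=> [relE univE] hom_g gE x.
have [f [_ [_ uniq_f]]] := univE _ _ relE.
have hom_id : is_alg_hom (@id A) by split.
by rewrite (uniq_f _ hom_g gE x) -(uniq_f _ hom_id (fun=> erefl) x).
Qed.

Lemma bq_translate (i j k : int) : bq (i + k) (j + k) = bq i j.
Proof.
rewrite /bq.
have -> : j + k - (i + k) = j - i by ring.
have -> : (j + k == i + k) = (j == i) by apply/eqP/eqP; lia.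
by have -> : (j + k == i + k + 1) = (j == i + 1) by apply/eqP/eqP; lia.
Qed.

Lemma bq_antisym (i j : int) : 1 < `|i - j| -> bq j i = - bq i j.
Proof.
move=> far; rewrite /bq.
have [-> -> -> ->] : [/\ (i == j) = false, (i == j + 1) = false,
                         (j == i) = false & (j == i + 1) = false].
  by split; apply/eqP; lia.
by rewrite /= -opprB sgzN !expN1r abszN; ring.
Qed.

Lemma q_neq0 : q != 0.
Proof. by rewrite tofrac_eq0 polyX_eq0. Qed.

Lemma expfz_mul_sqrN (F : fieldType) (e : int) (x : F) :
  x != 0 -> x ^ e * (x ^ (- e)) ^+ 2 = x ^ (- e).
Proof. by move=> x0; rewrite expr2 mulrA -expfzDr // subrr expr0z mul1r. Qed.

Lemma serre_coef_conv (e : int) : - (q ^ (- e) * q2) = - (q ^ e * q2) * (q ^ (- e)) ^+ 2.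
Proof. by rewrite -{1}(expfz_mul_sqrN e q_neq0); ring. Qed.

Lemma El_rels_conv (eps : int) (A : algType Kq) (E : int -> A) :
  El_rels eps E -> Elv_rels eps (fun i => q ^ (- eps) *: E (i + 1) : A^c).
Proof.
move=> [far [serreR serreL]]; split; [|split] => [i j ij|i|i].
- apply: conv_qcommute; rewrite far; last by lia.
  by rewrite bq_translate bq_antisym.
- by rewrite serre_coef_conv; apply: conv_serre; apply: serreR.
- rewrite serre_coef_conv subrK; apply: conv_serre.
  by have := serreL (i + 1); rewrite addrK.
Qed.

Lemma Elv_rels_conv (eps : int) (A : algType Kq) (E : int -> A) :
  Elv_rels eps E -> El_rels eps (fun i => q ^ eps *: E (i - 1) : A^c).
Proof.
move=> [far [serreR serreL]]; have coef := serre_coef_conv (- eps); rewrite opprK in coef.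
split; [|split] => [i j ij|i|i].
- apply: conv_qcommute; rewrite far; last by lia.
  by rewrite bq_translate bq_antisym // opprK.
- rewrite coef addrK; apply: conv_serre.
  by have := serreR (i - 1); rewrite subrK.
- by rewrite coef; apply: conv_serre; apply: serreL.
Qed.

Theorem mainTheorem2 (eps : int) (heps : eps = 1 \/ eps = -1)
  (El : algType Kq) (E : int -> El) (Elv : algType Kq) (Ev : int -> Elv) :
  presents (El_rels eps) E -> presents (Elv_rels eps) Ev ->
  exists sigma : Elv -> El,
    (is_alg_antiiso sigma /\ forall i : int, sigma (Ev i) = q ^ (- eps) *: E (i + 1)) /\
    forall tau : Elv -> El,
      is_alg_antiiso tau -> (forall i : int, tau (Ev i) = q ^ (- eps) *: E (i + 1)) ->
      forall x, tau x = sigma x.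
Proof.
move=> presE presEv; have [relE univE] := presE; have [relEv univEv] := presEv.
have [s [hom_s [sE uniq_s]]] := univEv _ _ (El_rels_conv relE).
have [r [hom_r [rE _]]] := univE _ _ (Elv_rels_conv relEv).
have [[lin_s _] [lin_r _]] := (hom_s, hom_r).
have rsK : cancel s r.
  apply: (presents_hom_id presEv (is_alg_hom_conv_comp hom_s hom_r)) => i.
  by rewrite sE (linear_scale lin_r) rE scalerA -expfzDr ?q_neq0 // addNr scale1r addrK.
have srK : cancel r s.
  apply: (presents_hom_id presE (is_alg_hom_conv_comp hom_r hom_s)) => i.
  by rewrite rE (linear_scale lin_s) sE scalerA -expfzDr ?q_neq0 // subrr scale1r subrK.
exists s; split.
  by split; [apply: conv_alg_antiiso hom_s _; exists r | exact: sE].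
move=> tau anti_tau tauE x.
exact: (uniq_s _ (alg_antiiso_conv anti_tau) tauE).
Qed.
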